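(* Let $(\Phi,D)$ and $(\Psi,E)$ be domain-free s-continuous information algebras. Then $([\Phi\rightarrow\Psi]_c,D\times E)$, with pointwise combination $(f\otimes g)(\phi)=f(\phi)\otimes g(\phi)$ and focusing $f^{\Rightarrow(x,y)}(\phi)=(f(\phi^{\Rightarrow x}))^{\Rightarrow y}$, is a domain-free continuous information algebra.
   Context: A domain-free information algebra $(\Phi,D)$ consists of a set $\Phi$, a lattice $D$, a combination $\otimes$ and a focusing $(\psi,x)\mapsto\psi^{\Rightarrow x}$ ($x\in D$) such that: $\otimes$ is associative, commutative with neutral element $e$; $(\psi^{\Rightarrow y})^{\Rightarrow x}=\psi^{\Rightarrow x\wedge y}$; $(\phi^{\Rightarrow x}\otimes\psi)^{\Rightarrow x}=\phi^{\Rightarrow x}\otimes\psi^{\Rightarrow x}$; every $\psi$ has some $x$ with $\psi^{\Rightarrow x}=\psi$; $\psi\otimes\psi^{\Rightarrow x}=\psi$. Order: $\psi\le\phi$ iff $\psi\otimes\phi=\phi$; suprema refer to this order. $a\ll b$ means: for every directed $X$ with $b\le\vee X$ there is $c\in X$ with $a\le c$. $(\Phi,D)$, with $D$ having a top element, is continuous (resp. s-continuous) if there exists $\Gamma\subseteq\Phi$, closed under combination and containing $e$, such that every directed subset of $\Gamma$ has a supremum in $\Phi$ and $\phi=\vee\{\psi\in\Gamma:\psi\ll\phi\}$ for all $\phi$ (resp. $\phi^{\Rightarrow x}=\vee\{\psi\in\Gamma:\psi=\psi^{\Rightarrow x}\ll\phi\}$ for all $\phi,x$). $[\Phi\rightarrow\Psi]_c$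 denotes the set of maps $f:\Phi\to\Psi$ with $f(\vee X)=\vee f(X)$ for every directed $X\subseteq\Phi$; $D\times E$ is the product lattice. *)

From mathcomp Require Import all_boot all_order.
Set Implicit Arguments. Unset Strict Implicit. Unset Printing Implicit Defensive.
Import Order.TTheory.
Local Open Scope order_scope.

(* A domain-free information algebra is described on a carrier given as a
   predicate [P] on an ambient type [T] (for an algebra on a whole type take
   [P := fun _ => True]); operations are total on [T] and the axioms require
   that [P] is closed under them. *)
Section InfoAlgebra.
Variables (disp : Order.disp_t) (D : tLatticeType disp) (T : Type).
Variables (P : T -> Prop) (comb : T -> T -> T) (e : T) (foc : T -> D -> T).

Definition ia_le (a b : T) : Prop := comb a b = b.

Definition ia_subset (X : T -> Prop) : Prop := forall x, X x -> P x.

Definition ia_is_sup (X : T -> Prop) (s : T) : Prop :=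
  P s /\ (forall x, X x -> ia_le x s) /\
  (forall u, P u -> (forall x, X x -> ia_le x u) -> ia_le s u).

Definition ia_directed (X : T -> Prop) : Prop :=
  ia_subset X /\ (exists x, X x) /\
  (forall a b, X a -> X b -> exists2 c, X c & ia_le a c /\ ia_le b c).

Definition ia_way_below (a b : T) : Prop :=
  forall X, ia_directed X -> forall s, ia_is_sup X s -> ia_le b s ->
    exists2 c, X c & ia_le a c.

Definition info_algebra : Prop :=
  P e /\
      (forall a b, P a -> P b -> P (comb a b)) /\
      (forall a x, P a -> P (foc a x)) /\
      (forall a b c, P a -> P b -> P c -> comb a (comb b c) = comb (comb a b) c) /\
      (forall a b, P a -> P b -> comb a b = comb b a) /\
      (forall a, P a -> comb e a = a) /\
      (forall a x y, P a -> foc (foc a y) x = foc a (x `&` y)) /\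
      (forall a b x, P a -> P b -> foc (comb (foc a x) b) x = comb (foc a x) (foc b x)) /\
      (forall a, P a -> exists x, foc a x = a) /\
      (forall a x, P a -> comb a (foc a x) = a).

Definition ia_basis (Gamma : T -> Prop) : Prop :=
  [/\ ia_subset Gamma,
      (forall a b, Gamma a -> Gamma b -> Gamma (comb a b)),
      Gamma e &
      (forall X, ia_directed X -> (forall x, X x -> Gamma x) -> exists s, ia_is_sup X s)].

Definition continuous_IA : Prop :=
  info_algebra /\
  exists Gamma, ia_basis Gamma /\
    forall phi, P phi ->
      ia_is_sup (fun psi => Gamma psi /\ ia_way_below psi phi) phi.

Definition s_continuous_IA : Prop :=
  info_algebra /\
  exists Gamma, ia_basis Gamma /\
    forall phi (x : D), P phi ->
      ia_is_sup (fun psi => [/\ Gamma psi, foc psi x = psi & ia_way_below psi phi])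
                (foc phi x).

End InfoAlgebra.

Definition scott_continuous (Phi Psi : Type) (combP : Phi -> Phi -> Phi)
  (combQ : Psi -> Psi -> Psi) (f : Phi -> Psi) : Prop :=
  forall X : Phi -> Prop, ia_directed (fun _ => True) combP X ->
  forall s, ia_is_sup (fun _ => True) combP X s ->
    ia_is_sup (fun _ => True) combQ (fun y => exists2 x, X x & y = f x) (f s).

(* Directed suprema of Scott-continuous maps are computed pointwise, and
   s-continuity of both algebras makes focusing Scott continuous, so the
   Scott-continuous maps form an information algebra closed under directed
   suprema.  For continuity, take the step maps [a => b], equal to b on the
   elements way above a and to the unit elsewhere: [a => b] is way below f as
   soon as b is way below f(a), and f(phi), being the directed supremum of the
   f(a) with a way below phi, is the supremum of such b by interpolation in Psi. *)

From mathcomp Require Import all_boot all_order.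
From Stdlib Require Import ClassicalEpsilon FunctionalExtensionality.
Import Order.TTheory.
Local Open Scope order_scope.
Set Implicit Arguments. Unset Strict Implicit.

Local Notation img f X := (fun y => exists2 x, X x & y = f x).

Lemma ia_directed_image (U T : Type) (PU : U -> Prop) (cU : U -> U -> U)
    (P : T -> Prop) (cT : T -> T -> T) (X : U -> Prop) (f : U -> T) :
  ia_directed PU cU X -> (forall x, X x -> P (f x)) ->
  (forall a b, X a -> X b -> ia_le cU a b -> ia_le cT (f a) (f b)) ->
  ia_directed P cT (img f X).
Proof.
move=> [_ [[x0 X0] dirX]] Pf f_mono; split; first by move=> _ [x Xx ->]; apply: Pf.
split; first by exists (f x0), x0.
move=> _ _ [a Xa ->] [b Xb ->]; have [c Xc [ac bc]] := dirX a b Xa Xb.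
by exists (f c); [exists c | split; apply: f_mono].
Qed.

Lemma ia_le_funP (A B : Type) (c : B -> B -> B) (f g : A -> B) :
  ia_le (fun f g a => c (f a) (g a)) f g <-> forall a, ia_le c (f a) (g a).
Proof.
split=> [fg a | fg]; first by rewrite /ia_le -[in RHS]fg.
exact: functional_extensionality.
Qed.

Section InfoAlgebraTheory.
Variables (disp : Order.disp_t) (D : tLatticeType disp) (T : Type).
Variables (P : T -> Prop) (comb : T -> T -> T) (e : T) (foc : T -> D -> T).
Hypothesis IA : info_algebra P comb e foc.

Local Notation le := (ia_le comb).
Local Notation wb := (ia_way_below P comb).
Local Notation sup := (ia_is_sup P comb).
Local Notation dir := (ia_directed P comb).

Lemma ia_unit_closed : P e.
Proof. by case: IA. Qed.
Lemma ia_comb_closed a b : P a -> P b -> P (comb a b).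
Proof. by case: IA => _ [h _]; apply: h. Qed.
Lemma ia_foc_closed a x : P a -> P (foc a x).
Proof. by case: IA => _ [_ [h _]]; apply: h. Qed.
Lemma ia_combA a b c : P a -> P b -> P c -> comb a (comb b c) = comb (comb a b) c.
Proof. by case: IA => _ [_ [_ [h _]]]; apply: h. Qed.
Lemma ia_combC a b : P a -> P b -> comb a b = comb b a.
Proof. by case: IA => _ [_ [_ [_ [h _]]]]; apply: h. Qed.
Lemma ia_comb_unit a : P a -> comb e a = a.
Proof. by case: IA => _ [_ [_ [_ [_ [h _]]]]]; apply: h. Qed.
Lemma ia_foc_foc a x y : P a -> foc (foc a y) x = foc a (x `&` y).
Proof. by case: IA => _ [_ [_ [_ [_ [_ [h _]]]]]]; apply: h. Qed.
Lemma ia_foc_comb a b x :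
  P a -> P b -> foc (comb (foc a x) b) x = comb (foc a x) (foc b x).
Proof. by case: IA => _ [_ [_ [_ [_ [_ [_ [h _]]]]]]]; apply: h. Qed.
Lemma ia_foc_support a : P a -> exists x, foc a x = a.
Proof. by case: IA => _ [_ [_ [_ [_ [_ [_ [_ [h _]]]]]]]]; apply: h. Qed.
Lemma ia_comb_foc a x : P a -> comb a (foc a x) = a.
Proof. by case: IA => _ [_ [_ [_ [_ [_ [_ [_ [_ h]]]]]]]]; apply: h. Qed.

Lemma ia_combxx a : P a -> comb a a = a.
Proof. by move=> Pa; have [x ax] := ia_foc_support Pa; rewrite -{2}ax ia_comb_foc. Qed.

Lemma ia_le_refl a : P a -> le a a.
Proof. exact: ia_combxx. Qed.

Lemma ia_le_trans a b c : P a -> P b -> P c -> le a b -> le b c -> le a c.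
Proof. by rewrite /ia_le => Pa Pb Pc ab bc; rewrite -bc ia_combA // ab. Qed.

Lemma ia_le_anti a b : P a -> P b -> le a b -> le b a -> a = b.
Proof. by rewrite /ia_le => Pa Pb ab ba; rewrite -ba ia_combC // ab. Qed.

Lemma ia_unit_le a : P a -> le e a.
Proof. exact: ia_comb_unit. Qed.

Lemma ia_le_combl a b : P a -> P b -> le a (comb a b).
Proof. by move=> Pa Pb; rewrite /ia_le ia_combA ?ia_combxx. Qed.

Lemma ia_le_combr a b : P a -> P b -> le b (comb a b).
Proof. by move=> Pa Pb; rewrite ia_combC //; apply: ia_le_combl. Qed.

Lemma ia_comb_lub a b u : P a -> P b -> P u -> le a u -> le b u -> le (comb a b) u.
Proof. by rewrite /ia_le => Pa Pb Pu au bu; rewrite -ia_combA // bu au. Qed.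

Lemma ia_le_comb2 a b c d :
  P a -> P b -> P c -> P d -> le a c -> le b d -> le (comb a b) (comb c d).
Proof.
move=> Pa Pb Pc Pd ac bd; have Pcd := ia_comb_closed Pc Pd.
apply: ia_comb_lub => //.
- by apply: ia_le_trans ac _ => //; apply: ia_le_combl.
- by apply: ia_le_trans bd _ => //; apply: ia_le_combr.
Qed.

Lemma ia_foc_le a x : P a -> le (foc a x) a.
Proof. by move=> Pa; rewrite /ia_le ia_combC ?ia_comb_foc //; apply: ia_foc_closed. Qed.

Lemma ia_foc_mono a b x : P a -> P b -> le a b -> le (foc a x) (foc b x).
Proof.
move=> Pa Pb ab; have Pax := ia_foc_closed x Pa.
have axb : comb (foc a x) b = b by apply: ia_le_trans ab => //; apply: ia_foc_le.
by rewrite /ia_le -ia_foc_comb // axb.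
Qed.

Lemma ia_foc_top a : P a -> foc a \top = a.
Proof.
by move=> Pa; have [x ax] := ia_foc_support Pa; rewrite -{1}ax ia_foc_foc // meet1x.
Qed.

Lemma ia_is_sup_ext (X Y : T -> Prop) s : (forall y, X y <-> Y y) -> sup X s -> sup Y s.
Proof.
move=> XY [Ps [ub lub]]; split=> //; split; first by move=> y /XY; apply: ub.
by move=> u Pu Yu; apply: lub => // y /XY; apply: Yu.
Qed.

Lemma ia_sup_unique X s t : sup X s -> sup X t -> s = t.
Proof.
move=> [Ps [ubs lubs]] [Pt [ubt lubt]].
by apply: ia_le_anti => //; [apply: lubs | apply: lubt].
Qed.

Lemma ia_wb_le a b : P b -> wb a b -> le a b.
Proof.
move=> Pb ab; have bb := ia_le_refl Pb.
have single_dir : dir (eq^~ b).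
  by split; [move=> _ -> | split; [exists b | move=> _ _ -> ->; exists b]].
have single_sup : sup (eq^~ b) b by split=> //; split=> [_ -> | u _]; last apply.
by have [_ -> ] := ab _ single_dir _ single_sup bb.
Qed.

Lemma ia_le_wb_trans a a' b : P a -> P a' -> le a a' -> wb a' b -> wb a b.
Proof.
move=> Pa Pa' aa' a'b X dirX s sups bs; have [c Xc a'c] := a'b X dirX s sups bs.
by exists c => //; case: dirX => subX _; apply: ia_le_trans aa' a'c => //; apply: subX.
Qed.

Lemma ia_wb_le_trans a b b' : P b -> P b' -> wb a b -> le b b' -> wb a b'.
Proof.
move=> Pb Pb' ab bb' X dirX s sups b's; apply: (ab X dirX s sups).
by apply: ia_le_trans bb' b's => //; case: sups.
Qed.

Lemma ia_wb_comb a1 a2 b : P a1 -> P a2 -> wb a1 b -> wb a2 b -> wb (comb a1 a2) b.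
Proof.
move=> Pa1 Pa2 a1b a2b X dirX s sups bs.
have [c1 Xc1 a1c1] := a1b X dirX s sups bs; have [c2 Xc2 a2c2] := a2b X dirX s sups bs.
have [subX [_ upX]] := dirX; have [c Xc [c1c c2c]] := upX c1 c2 Xc1 Xc2.
have Pc := subX _ Xc; exists c => //; apply: ia_comb_lub => //.
- by apply: ia_le_trans a1c1 c1c => //; apply: subX.
- by apply: ia_le_trans a2c2 c2c => //; apply: subX.
Qed.

Lemma ia_unit_wb b : wb e b.
Proof. by move=> X [subX [[x Xx] _]] s _ _; exists x => //; apply/ia_unit_le/subX. Qed.

End InfoAlgebraTheory.

Lemma s_continuous_IA_continuous disp (D : tLatticeType disp) (T : Type)
    (P : T -> Prop) (comb : T -> T -> T) (e : T) (foc : T -> D -> T) :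
  s_continuous_IA P comb e foc -> continuous_IA P comb e foc.
Proof.
case=> IA [G [basisG supG]]; split=> //; exists G; split=> // phi Pphi.
have := supG phi \top Pphi; rewrite (ia_foc_top IA) //; apply: ia_is_sup_ext => psi.
split=> [[] // | [Gpsi phi_psi]]; split=> //.
by case: basisG => subG _ _ _; apply/(ia_foc_top IA)/subG.
Qed.

Section ContinuousTheory.
Variables (disp : Order.disp_t) (D : tLatticeType disp) (T : Type).
Variables (comb : T -> T -> T) (e : T) (foc : T -> D -> T).
Hypothesis C : continuous_IA (fun _ => True) comb e foc.

Let IA := proj1 C.
Local Notation wb := (ia_way_below (fun _ => True) comb).
Local Notation sup := (ia_is_sup (fun _ => True) comb).
Local Notation dir := (ia_directed (fun _ => True) comb).

Lemma ia_wb_is_sup phi : sup (wb^~ phi) phi.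
Proof.
have [_ [G [_ supG]]] := C; have [_ [_ lub]] := supG phi I.
split=> //; split=> [a | u _ ub]; first exact: (ia_wb_le IA).
by apply: lub => // a [_]; apply: ub.
Qed.

Lemma ia_wb_directed phi : dir (wb^~ phi).
Proof.
split=> //; split; first by exists e; apply: (ia_unit_wb IA).
move=> a b aphi bphi; exists (comb a b); first exact: (ia_wb_comb IA).
by split; [apply: (ia_le_combl IA) | apply: (ia_le_combr IA)].
Qed.

Lemma ia_directed_has_sup X : dir X -> exists s, sup X s.
Proof.
move=> dirX; have [_ [G [[_ Gcomb Ge Gsup] supG]]] := C.
(* The basis elements way below some member of X form a directed set with the
   same upper bounds as X. *)
pose Y y := G y /\ exists2 x, X x & wb y x.
have dirY : dir Y.
  have [_ [[x0 Xx0] upX]] := dirX; split=> //; split.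
    by exists e; split=> //; exists x0 => //; apply: (ia_unit_wb IA).
  move=> a b [Ga [xa Xxa axa]] [Gb [xb Xxb bxb]].
  have [c Xc [xac xbc]] := upX xa xb Xxa Xxb.
  exists (comb a b); last by split; [apply: (ia_le_combl IA) | apply: (ia_le_combr IA)].
  split; first exact: Gcomb.
  by exists c => //; apply: (ia_wb_comb IA) => //;
    [apply: (ia_wb_le_trans IA _ _ axa xac) | apply: (ia_wb_le_trans IA _ _ bxb xbc)].
have [s [_ [ubs lubs]]] := Gsup Y dirY (fun y Yy => proj1 Yy).
exists s; split=> //; split.
  move=> x Xx; have [_ [_ lub]] := supG x I; apply: lub => // y [Gy yx].
  by apply: ubs; split=> //; exists x.
move=> u _ ub; apply: lubs => // y [_ [x Xx yx]].
by apply: (ia_le_trans IA) (ub x Xx) => //; apply: (ia_wb_le IA).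
Qed.

Lemma ia_wb_interpolate a s : wb a s -> exists c, wb a c /\ wb c s.
Proof.
move=> as_.
(* s is also the directed supremum of the elements way below some element way
   below s. *)
pose Y y := exists z, wb y z /\ wb z s.
have dirY : dir Y.
  split=> //; split; first by exists e, e; split; apply: (ia_unit_wb IA).
  move=> y1 y2 [z1 [y1z1 z1s]] [z2 [y2z2 z2s]].
  exists (comb y1 y2); last by split; [apply: (ia_le_combl IA) | apply: (ia_le_combr IA)].
  exists (comb z1 z2); split; last exact: (ia_wb_comb IA).
  apply: (ia_wb_comb IA) => //.
  - exact: (ia_wb_le_trans IA _ _ y1z1 (ia_le_combl IA _ _)).
  - exact: (ia_wb_le_trans IA _ _ y2z2 (ia_le_combr IA _ _)).
have supY : sup Y s.
  split=> //; split.
    move=> y [z [yz zs]].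
    by apply: (ia_le_trans IA) (ia_wb_le IA _ zs) => //; apply: (ia_wb_le IA).
  move=> u _ ub; have [_ [_ lub]] := ia_wb_is_sup s; apply: lub => // z zs.
  have [_ [_ lubz]] := ia_wb_is_sup z; apply: lubz => // y yz.
  by apply: ub; exists z.
have [y [z [yz zs]] ay] := as_ Y dirY s supY (ia_le_refl IA I).
by exists z; split=> //; apply: (ia_le_wb_trans IA _ _ ay yz).
Qed.

Lemma ia_wb_directed_sup X s a :
  dir X -> sup X s -> wb a s -> exists2 x, X x & wb a x.
Proof.
move=> dirX supX as_; have [c [ac cs]] := ia_wb_interpolate as_.
have [x Xx cx] := cs X dirX s supX (ia_le_refl IA I).
by exists x => //; apply: (ia_wb_le_trans IA _ _ ac cx).
Qed.

End ContinuousTheory.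

Lemma scott_continuous_foc disp (D : tLatticeType disp) (T : Type)
    (comb : T -> T -> T) (e : T) (foc : T -> D -> T) (x : D) :
  s_continuous_IA (fun _ => True) comb e foc -> scott_continuous comb comb (foc^~ x).
Proof.
case=> IA [G [_ supG]] X dirX s supX; split=> //; split.
  move=> _ [a Xa ->]; apply: (ia_foc_mono IA) => //; case: supX => _ [ub _]; exact: ub.
move=> u _ ub; have [_ [_ lub]] := supG s x I; apply: lub => // psi [_ psix psis].
have [a Xa psia] := psis X dirX s supX (ia_le_refl IA I).
rewrite -psix; apply: (ia_le_trans IA) (ub _ _) => //; last by exists a.
exact: (ia_foc_mono IA).
Qed.

Section ScottContinuity.
Variables (A B C : Type) (cA : A -> A -> A) (cB : B -> B -> B) (cC : C -> C -> C).
Hypothesis cAxx : forall a, cA a a = a.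

Lemma scott_continuous_mono (f : A -> B) a b :
  scott_continuous cA cB f -> ia_le cA a b -> ia_le cB (f a) (f b).
Proof.
move=> f_cont ab; pose X c := c = a \/ c = b.
have Xb x : X x -> ia_le cA x b by case=> ->; [exact: ab | exact: cAxx].
have dirX : ia_directed (fun _ => True) cA X.
  by split=> //; split=> [|x y Xx Xy]; [exists a; left | exists b; [right | split; apply: Xb]].
have supX : ia_is_sup (fun _ => True) cA X b by split=> //; split=> // u _; apply; right.
by have [_ [ub _]] := f_cont X dirX b supX; apply: ub; exists a => //; left.
Qed.

Lemma scott_continuous_comp (f : A -> B) (g : B -> C) :
  scott_continuous cA cB f -> scott_continuous cB cC g ->
  scott_continuous cA cC (fun x => g (f x)).
Proof.
move=> f_cont g_cont X dirX s supX.
have dirfX : ia_directed (fun _ => True) cB (img f X).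
  by apply: ia_directed_image dirX _ _ => // a b _ _; apply: scott_continuous_mono.
have [_ [ub lub]] := g_cont _ dirfX _ (f_cont X dirX s supX).
split=> //; split=> [_ [x Xx ->] | u _ ubu].
  by apply: ub; exists (f x) => //; exists x.
by apply: lub => // _ [_ [x Xx ->] ->]; apply: ubu; exists x.
Qed.

End ScottContinuity.

Lemma scott_continuous_const (A B : Type) (cA : A -> A -> A) (cB : B -> B -> B) (b : B) :
  cB b b = b -> scott_continuous cA cB (fun _ => b).
Proof.
move=> bb X [_ [[x0 Xx0] _]] s _; split=> //; split; first by move=> _ [x _ ->].
by move=> u _ ub; apply: ub; exists x0.
Qed.

Section ScottFunctionSpace.
Variables (dD dE : Order.disp_t) (D : tLatticeType dD) (E : tLatticeType dE).
Variables (Phi : Type) (combP : Phi -> Phi -> Phi) (eP : Phi) (focP : Phi -> D -> Phi).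
Variables (Psi : Type) (combQ : Psi -> Psi -> Psi) (eQ : Psi) (focQ : Psi -> E -> Psi).
Hypothesis SCP : s_continuous_IA (fun _ => True) combP eP focP.
Hypothesis SCQ : s_continuous_IA (fun _ => True) combQ eQ focQ.

Let CP := s_continuous_IA_continuous SCP.
Let CQ := s_continuous_IA_continuous SCQ.
Let IAP := proj1 SCP.
Let IAQ := proj1 SCQ.
Let combPxx (phi : Phi) : combP phi phi = phi := ia_combxx IAP I.

Local Notation PF := (scott_continuous combP combQ).
Local Notation combF := (fun (f g : Phi -> Psi) phi => combQ (f phi) (g phi)).
Local Notation eF := (fun _ : Phi => eQ).
Local Notation focF :=
  (fun (f : Phi -> Psi) (xy : (D *p E)%type) phi => focQ (f (focP phi xy.1)) xy.2).
Local Notation leP := (ia_le combP).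
Local Notation leQ := (ia_le combQ).
Local Notation supQ := (ia_is_sup (fun _ => True) combQ).
Local Notation wbP := (ia_way_below (fun _ => True) combP).
Local Notation wbQ := (ia_way_below (fun _ => True) combQ).
Local Notation wbF := (ia_way_below PF combF).
Local Notation dirF := (ia_directed PF combF).

Lemma scott_continuous_fun_comb f g : PF f -> PF g -> PF (combF f g).
Proof.
move=> f_cont g_cont X dirX s supX; split=> //; split.
  move=> _ [x Xx ->]; have xs : leP x s by case: supX => _ [ub _]; apply: ub.
  by apply: (ia_le_comb2 IAQ) => //; apply: scott_continuous_mono.
move=> u _ ub; have [_ [_ lubf]] := f_cont X dirX s supX.
have [_ [_ lubg]] := g_cont X dirX s supX.
apply: (ia_comb_lub IAQ) => //; [apply: lubf | apply: lubg] => // _ [x Xx ->];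
  apply: (ia_le_trans IAQ) (ub _ _) => //; try by exists x.
- exact: (ia_le_combl IAQ).
- exact: (ia_le_combr IAQ).
Qed.

Lemma scott_continuous_fun_foc f xy : PF f -> PF (focF f xy).
Proof.
move=> f_cont; apply: scott_continuous_comp (scott_continuous_foc xy.2 SCQ) => //.
exact: scott_continuous_comp (scott_continuous_foc xy.1 SCP) f_cont.
Qed.

Lemma fun_info_algebra : info_algebra PF combF eF focF.
Proof.
split; first exact/scott_continuous_const/(ia_combxx IAQ).
split; first exact: scott_continuous_fun_comb.
split; first exact: scott_continuous_fun_foc.
split; first by move=> f g h _ _ _; apply: functional_extensionality => ?; apply: (ia_combA IAQ).
split; first by move=> f g _ _; apply: functional_extensionality => ?; apply: (ia_combC IAQ).
split; first by move=> f _; apply: functional_extensionality => ?; apply: (ia_comb_unit IAQ).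
split.
  move=> f x y _; apply: functional_extensionality => phi /=.
  by rewrite (ia_foc_foc IAP) // (ia_foc_foc IAQ) // [y.1 `&` _]meetC.
split.
  move=> f g x _ _; apply: functional_extensionality => phi /=.
  by rewrite (ia_foc_foc IAP) // meetxx (ia_foc_comb IAQ).
split.
  move=> f _; exists \top; apply: functional_extensionality => phi /=.
  by rewrite (ia_foc_top IAP) // (ia_foc_top IAQ).
move=> f [x y] f_cont; apply: functional_extensionality => phi /=.
rewrite (ia_combC IAQ) //; apply: (ia_le_trans IAQ) (ia_foc_le IAQ _ _) _ => //.
by apply: scott_continuous_mono => //; apply: (ia_foc_le IAP).
Qed.

Lemma fun_pointwise_directed F phi :
  dirF F -> ia_directed (fun _ => True) combQ (img (fun g => g phi) F).
Proof. by move=> dirFF; apply: ia_directed_image dirFF _ _ => // f g _ _ /ia_le_funP. Qed.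

Lemma fun_pointwise_sup_exists F :
  dirF F -> exists U, forall phi, supQ (img (fun g => g phi) F) (U phi).
Proof.
move=> dirFF; have supU phi : {s | supQ (img (fun g => g phi) F) s}.
  exact/constructive_indefinite_description/(ia_directed_has_sup CQ)/fun_pointwise_directed.
by exists (fun phi => proj1_sig (supU phi)) => phi; apply: proj2_sig.
Qed.

Lemma scott_continuous_pointwise_sup F U :
  dirF F -> (forall phi, supQ (img (fun g => g phi) F) (U phi)) -> PF U.
Proof.
case=> subF _ supU X dirX s supX; split=> //; split.
  move=> _ [x Xx ->]; have [_ [_ lubx]] := supU x; apply: lubx => // _ [g Fg ->].
  have [_ [ubs _]] := supU s; apply: (ia_le_trans IAQ) (ubs _ _) => //; last by exists g.
  by apply: scott_continuous_mono (subF g Fg) _ => //; case: supX => _ [ubX _]; apply: ubX.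
move=> u _ ub; have [_ [_ lubs]] := supU s; apply: lubs => // _ [g Fg ->].
have [_ [_ lubg]] := subF g Fg X dirX s supX; apply: lubg => // _ [x Xx ->].
have [_ [ubx _]] := supU x; apply: (ia_le_trans IAQ) (ub _ _) => //; last by exists x.
by apply: ubx; exists g.
Qed.

Lemma fun_is_sup_pointwise F U : PF U ->
  (forall phi, supQ (img (fun g => g phi) F) (U phi)) -> ia_is_sup PF combF F U.
Proof.
move=> U_cont supU; split=> //; split=> [g Fg | u _ ub]; apply/ia_le_funP => phi.
  by have [_ [ubphi _]] := supU phi; apply: ubphi; exists g.
have [_ [_ lubphi]] := supU phi; apply: lubphi => // _ [g Fg ->].
by move: (ub g Fg) => /ia_le_funP.
Qed.

Lemma fun_directed_has_sup F : dirF F -> exists U, ia_is_sup PF combF F U.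
Proof.
move=> dirFF; have [U supU] := fun_pointwise_sup_exists dirFF.
by exists U; apply: fun_is_sup_pointwise (scott_continuous_pointwise_sup dirFF supU) supU.
Qed.

Definition step (a : Phi) (b : Psi) : Phi -> Psi :=
  fun phi => if excluded_middle_informative (wbP a phi) then b else eQ.

Lemma step_in a b phi : wbP a phi -> step a b phi = b.
Proof. by rewrite /step; case: excluded_middle_informative. Qed.

Lemma step_out a b phi : ~ wbP a phi -> step a b phi = eQ.
Proof. by rewrite /step; case: excluded_middle_informative. Qed.

Lemma step_le a b f : PF f -> leQ b (f a) -> ia_le combF (step a b) f.
Proof.
move=> f_cont bfa; apply/ia_le_funP => phi.
have [aphi | aphi] := excluded_middle_informative (wbP a phi); last first.
  by rewrite step_out //; apply: (ia_unit_le IAQ).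
rewrite step_in //; apply: (ia_le_trans IAQ) bfa _ => //.
exact/(scott_continuous_mono combPxx f_cont)/(ia_wb_le IAP).
Qed.

Lemma scott_continuous_step a b : PF (step a b).
Proof.
move=> X dirX s supX; have [as_ | not_as] := excluded_middle_informative (wbP a s).
  rewrite (step_in b as_); have [x1 Xx1 ax1] := ia_wb_directed_sup CP dirX supX as_.
  split=> //; split=> [_ [x _ ->] | u _ ub].
    have [ax | not_ax] := excluded_middle_informative (wbP a x).
      by rewrite step_in //; apply: (ia_le_refl IAQ).
    by rewrite step_out //; apply: (ia_unit_le IAQ).
  by rewrite -(step_in b ax1); apply: ub; exists x1.
have not_ax x : X x -> ~ wbP a x.
  move=> Xx ax; apply: not_as; apply: (ia_wb_le_trans IAP I I ax).
  by case: supX => _ [ub _]; apply: ub.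
rewrite (step_out b not_as); split=> //; split=> [_ [x Xx ->] | u _ _].
  by rewrite (step_out b (not_ax x Xx)); apply: (ia_le_refl IAQ).
exact: (ia_unit_le IAQ).
Qed.

Lemma wb_step a b f : PF f -> wbQ b (f a) -> wbF (step a b) f.
Proof.
move=> f_cont bfa F dirFF S supF fS.
have [U supU] := fun_pointwise_sup_exists dirFF.
have SU : S = U.
  apply: (ia_sup_unique fun_info_algebra supF).
  exact: fun_is_sup_pointwise (scott_continuous_pointwise_sup dirFF supU) supU.
have bUa : wbQ b (U a).
  by apply: (ia_wb_le_trans IAQ I I bfa); move: fS; rewrite SU => /ia_le_funP.
have [_ [g Fg ->] bga] :=
  bUa _ (fun_pointwise_directed a dirFF) _ (supU a) (ia_le_refl IAQ I).
by exists g => //; apply: step_le => //; case: dirFF => subF _; apply: subF.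
Qed.

Lemma fun_wb_is_sup f : PF f -> ia_is_sup PF combF (fun g => PF g /\ wbF g f) f.
Proof.
move=> f_cont; split=> //; split=> [g [_ gf] | u _ ub].
  exact: (ia_wb_le fun_info_algebra f_cont gf).
apply/ia_le_funP => phi; have [_ [_ lub]] := ia_wb_is_sup CQ (f phi).
apply: lub => // b bfphi; have [b' [bb' b'fphi]] := ia_wb_interpolate CQ bfphi.
have dir_fwb : ia_directed (fun _ => True) combQ (img f (wbP^~ phi)).
  apply: ia_directed_image (ia_wb_directed CP phi) _ _ => // x y _ _.
  exact: scott_continuous_mono.
have sup_fwb := f_cont _ (ia_wb_directed CP phi) _ (ia_wb_is_sup CP phi).
have [_ [a aphi ->] b'fa] := b'fphi _ dir_fwb _ sup_fwb (ia_le_refl IAQ I).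
have bfa : wbQ b (f a) := ia_wb_le_trans IAQ I I bb' b'fa.
move: (ub _ (conj (scott_continuous_step a b) (wb_step f_cont bfa))).
by move=> /ia_le_funP /(_ phi); rewrite step_in.
Qed.

End ScottFunctionSpace.

Unset Implicit Arguments.
Set Strict Implicit.

Theorem lemma3p13 (dD dE : Order.disp_t) (D : tLatticeType dD) (E : tLatticeType dE)
  (Phi : Type) (combP : Phi -> Phi -> Phi) (eP : Phi) (focP : Phi -> D -> Phi)
  (Psi : Type) (combQ : Psi -> Psi -> Psi) (eQ : Psi) (focQ : Psi -> E -> Psi) :
  s_continuous_IA (fun _ : Phi => True) combP eP focP ->
  s_continuous_IA (fun _ : Psi => True) combQ eQ focQ ->
  @continuous_IA _ (D *p E)%type (Phi -> Psi)
    (scott_continuous combP combQ)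
    (fun f g phi => combQ (f phi) (g phi))
    (fun _ => eQ)
    (fun f xy phi => focQ (f (focP phi xy.1)) xy.2).
Proof.
move=> SCP SCQ; have IAF := fun_info_algebra SCP SCQ.
split=> //; exists (scott_continuous combP combQ); split; last exact: fun_wb_is_sup SCP SCQ.
split=> //; [exact: ia_comb_closed IAF | exact: ia_unit_closed IAF |].
by move=> F dirF _; apply: fun_directed_has_sup SCP SCQ F dirF.
Qed.
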